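(* Let $\mathcal{M}=(S,A,\Delta,T,\rho)$ be a w\~pMDP whose target states are $T=\{t_0,\dots,t_n\}$ with $0=\rho(t_0)<\rho(t_1)<\dots<\rho(t_n)$, and let $\mathcal{G}(\mathcal{M})=(V,E)$. Let $\mathcal{N}$ be the \~pMDP obtained from $\mathcal{M}$ by adding two fresh states $\mathit{fin},\mathit{fail}$ (the only target states of $\mathcal{N}$), a fresh action $a\notin A$, keeping all transitions of $\Delta$, and adding the transitions $(t_i,a,\mathit{fin})$ and $(t_i,a,t_{i-1})$ for every $i\in\{1,\dots,n\}$ and $(t_0,a,\mathit{fail})$ (so each $t_i$ is a non-target state of $\mathcal{N}$). Then for every $v\in V$ and every $W\subseteq V$: $v\trianglelefteq W$ holds in $\mathcal{M}$ if and only if $v\trianglelefteq W$ holds in $\mathcal{N}$.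
   Context: A weighted parametric MDP (wpMDP) is $(S,A,X,\delta,T,\rho)$: finite states $S$, actions $A$, parameters $X$, targets $T\subseteq S$ (no outgoing transitions), $\delta:(S\setminus T)\times A\times S\to\mathbb{Q}[X]$, weights $\rho:T\to\mathbb{Q}$. A weighted trivially parametric MDP (w\~pMDP) is a wpMDP where every $\delta(s,a,s')$ is either syntactically $0$ or a parameter used on no other transition; it is written $(S,A,\Delta,T,\rho)$ with $\Delta\subseteq (S\setminus T)\times A\times S$ the set of transitions with nonzero polynomial. A \~pMDP is a w\~pMDP with $T=\{\mathit{fin},\mathit{fail}\}$, $\rho(\mathit{fin})=1$, $\rho(\mathit{fail})=0$. Its graph $\mathcal{G}=(V,E)$ has $V=S\cup((S\setminus T)\times A)$, an edge $((s,a),s')$ iff $(s,a,s')\in\Delta$, and an edge $(s,(s,a))$ iff $(s,a,s')\in\Delta$ for some $s'$ other than the zero-weight target $\mathit{fail}$; $vE$ is the successor set. Graph-preserving valuations are exactly the assignments, to every $(s,a)$ with $s\notin T$, of a probability distribution with full support on $\{s':(s,a,s')\in\Delta\}$ (if this set is empty, $(s,a)$ moves to the zero-weight target with probability $1$). A strategy $\sigma:S\setminus T\to A$ and a valuation $\mathsf{val}$ induce a Markov chain; $\mathrm{Rew}^\sigma_{\mathsf{val}}(s)=\sum_{t\in T}\rho(t)\mathbb{P}^s[\Diamond t]$ for states, $\mathrm{Rew}^\sigma_{\mathsf{val}}((s,a))=\sum_{s'}\mathsf{val}_{(s,a)}(s')\mathrm{Rew}^\sigma_{\mathsf{val}}(s')$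 for state-action pairs, and $\mathrm{Rew}^*_{\mathsf{val}}(v)=\max_\sigma\mathrm{Rew}^\sigma_{\mathsf{val}}(v)$. Never-worse relation: $v\trianglelefteq W$ iff for every graph-preserving valuation $\mathsf{val}$ there is $w\in W$ with $\mathrm{Rew}^*_{\mathsf{val}}(v)\le\mathrm{Rew}^*_{\mathsf{val}}(w)$. *)

From HB Require Import structures.
From mathcomp Require Import all_boot all_order all_algebra.
From mathcomp Require Import classical_sets reals Rstruct.
From Stdlib Require Rdefinitions.

Set Implicit Arguments.
Unset Strict Implicit.
Unset Printing Implicit Defensive.

Import Order.TTheory GRing.Theory Num.Theory.
Local Open Scope ring_scope.

Notation Real := Rdefinitions.R.

Section Chain.
Variable S : finType.
Variable P : S -> S -> Real.

Fixpoint reachn (k : nat) (s t : S) : Real :=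
  if k is k'.+1 then
    (if s == t then 1 else \sum_(s' : S) P s s' * reachn k' s' t)
  else (s == t)%:R.

Definition reach (s t : S) : Real := sup (range (fun k => reachn k s t)).
End Chain.

(*  - T : set of target states, rho : weights (only used on T);              *)
(*  - z : the zero-weight target to which a pair (s,a) without successors    *)
(*        moves with probability 1.                                          *)
(* Strategies are (memoryless deterministic) functions S -> A; their values  *)
(* on target states are irrelevant.                                          *)
Section WpMDP.
Variables (S A : finType) (D : S -> A -> S -> bool) (T : {set S})
          (rho : S -> rat) (z : S).

Definition graph_preserving (val : S -> A -> S -> Real) : Prop :=
  forall s a, s \notin T -> [exists s', D s a s'] ->
    [/\ forall s', D s a s' -> 0 < val s a s',
        forall s', ~~ D s a s' -> val s a s' = 0
      & \sum_(s' : S) val s a s' = 1].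

Definition row (val : S -> A -> S -> Real) (s : S) (a : A) (s' : S) : Real :=
  if [exists s'', D s a s''] then val s a s' else (s' == z)%:R.

Definition chain (val : S -> A -> S -> Real) (sigma : {ffun S -> A})
    (s s' : S) : Real :=
  if s \in T then (s' == s)%:R else row val s (sigma s) s'.

(* vertices of the graph G: V = S u ((S \ T) x A) *)
Definition vertex := (S + S * A)%type.

Definition is_vertex (v : vertex) : bool :=
  match v with inl _ => true | inr sa => sa.1 \notin T end.

Definition RewS (val : S -> A -> S -> Real) (sigma : {ffun S -> A}) (s : S)
  : Real :=
  \sum_(t in T) ratr (rho t) * reach (chain val sigma) s t.

Definition Rew (val : S -> A -> S -> Real) (sigma : {ffun S -> A})
    (v : vertex) : Real :=
  match v with
  | inl s => RewS val sigma s
  | inr (s, a) => \sum_(s' : S) row val s a s' * RewS val sigma s'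
  end.

(* Rew*_val(v) = max_sigma Rew^sigma_val(v)  (0 if there is no strategy,    *)
(* which cannot happen when A is nonempty).                                  *)
Definition Rstar (val : S -> A -> S -> Real) (v : vertex) : Real :=
  match [pick sigma : {ffun S -> A}] with
  | Some sigma0 =>
      \big[Num.max/Rew val sigma0 v]_(sigma : {ffun S -> A}) Rew val sigma v
  | None => 0
  end.

Definition never_worse (v : vertex) (W : {set vertex}) : Prop :=
  forall val, graph_preserving val ->
    exists2 w, w \in W & Rstar val v <= Rstar val w.

Definition targets_absorbing : Prop :=
  forall t a s', t \in T -> ~~ D t a s'.

End WpMDP.

(* Targets of M are t 0, ..., t n.  States of N: S + bool, with              *)
(* inr true = fin and inr false = fail; actions of N: option A, with         *)
(* None = the fresh action a.                                               *)
Section Construction.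
Variables (S A : finType) (D : S -> A -> S -> bool) (n : nat)
          (t : 'I_n.+1 -> S).

Definition NS := (S + bool)%type.
Definition NA := option A.
Definition fin : NS := inr true.
Definition fail : NS := inr false.

Definition ND (x : NS) (b : NA) (y : NS) : bool :=
  match x, b, y with
  | inl s, Some b', inl s' => D s b' s'
  | inl s, None, inr true => [exists i : 'I_n.+1, leq 1 i && (s == t i)]
  | inl s, None, inl s' =>
      [exists i : 'I_n.+1, [&& leq 1 i, s == t i & s' == t (inord i.-1)]]
  | inl s, None, inr false => s == t ord0
  | _, _, _ => false
  end.

Definition NT : {set NS} := [set fin; fail].

Definition Nrho (x : NS) : rat := if x == fin then 1 else 0.

Definition embed_vertex (v : vertex S A) : vertex NS NA :=
  match v with
  | inl s => inl (inl s)
  | inr (s, a) => inr (inl s, Some a)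
  end.

Definition embed_set (W : {set vertex S A}) : {set vertex NS NA} :=
  embed_vertex @: W.

End Construction.

(* For a fixed graph-preserving valuation the optimal rewards are pinned down by
   a certificate (h, sigma, r): h is nonnegative, equals the weights on targets,
   dominates its one-step averages, is reproduced by sigma, and sigma makes
   progress along the rank r from every state of positive value.  Any certificate
   gives Rstar = h on states and the one-step average of h on state-action pairs,
   and value iteration produces one.
   Both directions transport certificates along a strictly increasing map, which
   preserves the never-worse relation.  From a valuation of M with certificate h,
   letting t_i move to fin with a suitable probability and to t_(i-1) otherwise
   gives a valuation of N with certificate c * h for a small constant c > 0.
   Conversely, for a valuation of N with certificate h, the values
   h(t_0) < ... < h(t_n) increase strictly, so a strictly increasing
   piecewise-linear phi sends them to rho(t_0) < ... < rho(t_n); reweighting each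
   distribution of N on the same support so that averages commute with phi gives
   a valuation of M with certificate phi o h. *)

From mathcomp Require Import all_boot all_order all_algebra.
From mathcomp Require Import classical_sets reals Rstruct boolp.
From mathcomp Require Import ring lra.
From Pilot Require Import Defs.

Set Implicit Arguments.
Unset Strict Implicit.
Unset Printing Implicit Defensive.

Import Order.TTheory GRing.Theory Num.Theory.
Local Open Scope ring_scope.

Lemma sumr_delta (R : pzSemiRingType) (I : finType) (j : I) (f : I -> R) :
  \sum_i (i == j)%:R * f i = f j.
Proof.
rewrite (bigD1 j) //= eqxx mul1r big1 ?addr0 // => i /negPf->.
by rewrite mul0r.
Qed.

Section ConvexCombinations.
Variables (R : realFieldType) (I : finType).
Implicit Types (P : pred I) (p q g u : I -> R).

Definition is_distr p := (forall i, 0 <= p i) /\ \sum_i p i = 1.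

Definition distr_on P p :=
  [/\ forall i, P i -> 0 < p i, forall i, ~~ P i -> p i = 0 & \sum_i p i = 1].

Lemma distr_on_gt0 P p : distr_on P p -> forall i, (0 < p i) = P i.
Proof.
move=> [pP pN _] i; apply/idP/idP => [p_gt0|/pP //].
by apply: contraTT p_gt0 => /pN ->; rewrite ltxx.
Qed.

Lemma distr_onW P p : distr_on P p -> is_distr p.
Proof.
move=> [pP pN p1]; split=> // i.
by have [/pP/ltW|/pN->] := boolP (P i).
Qed.

Lemma convex_comb_eq_ub p g m : is_distr p ->
  (forall i, 0 < p i -> g i <= m) -> \sum_i p i * g i = m ->
  forall i, 0 < p i -> g i = m.
Proof.
move=> [p_ge0 p1] g_le avg_g i p_gt0.
have gap0 : \sum_i p i * (m - g i) = 0.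
  under eq_bigr do rewrite mulrBr.
  by rewrite sumrB -mulr_suml p1 mul1r avg_g subrr.
have gap_ge0 j : true -> 0 <= p j * (m - g j).
  move=> _; have [pj0|pj_gt0] := eqVneq (p j) 0; first by rewrite pj0 mul0r.
  have {}pj_gt0 : 0 < p j by rewrite lt_def pj_gt0 p_ge0.
  by rewrite mulr_ge0 ?subr_ge0 ?g_le ?ltW.
move/eqP: (@psumr_eq0P _ _ _ _ gap_ge0 gap0 i isT).
by rewrite mulf_eq0 gt_eqF //= subr_eq0 => /eqP.
Qed.

Lemma distr_on_mix_between P q g j tau : distr_on P q -> P j ->
  (g j < tau <= \sum_i q i * g i) || (\sum_i q i * g i <= tau < g j) ->
  exists2 p, distr_on P p & \sum_i p i * g i = tau.
Proof.
move=> [qP qN q1] Pj between; set U := \sum_i q i * g i.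
set lam := (tau - g j) / (U - g j).
have [lam_gt0 lam_le1 lamE] : [/\ 0 < lam, lam <= 1 & lam * (U - g j) = tau - g j].
  suff ratio (e d : R) : 0 < e <= d -> [/\ 0 < e / d, e / d <= 1 & e / d * d = e].
    case/orP: between => /andP[lt_tau le_tau].
      by apply: ratio; rewrite subr_gt0 lt_tau lerD2r.
    have -> : lam = (g j - tau) / (g j - U) by rewrite /lam -mulrNN -invrN !opprB.
    have [|-> -> dE] := ratio (g j - tau) (g j - U).
      by rewrite subr_gt0 le_tau lerD2l lerN2.
    by split=> //; rewrite -[U - g j]opprB mulrN dE opprB.
  move=> /andP[e_gt0 le_ed]; have d_gt0 := lt_le_trans e_gt0 le_ed.
  by rewrite divr_gt0 // ler_pdivrMr // mul1r divfK ?gt_eqF.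
exists (fun i => lam * q i + (1 - lam) * (i == j)%:R).
  split.
  - move=> i Pi; apply: ltr_pwDl; first by rewrite mulr_gt0 ?qP.
    by rewrite mulr_ge0 ?subr_ge0.
  - move=> i nPi; have /negPf-> : i != j by apply: contraNneq nPi => ->.
    by rewrite qN // !mulr0 addr0.
  - rewrite big_split /= -!mulr_sumr q1.
    under [\sum_i (i == j)%:R]eq_bigr do rewrite -[(_ == _)%:R]mulr1.
    by rewrite (sumr_delta j (fun=> 1)) !mulr1 addrC subrK.
under eq_bigr do rewrite mulrDl -[lam * _ * _]mulrA -[(1 - lam) * _ * _]mulrA.
rewrite big_split /= -!mulr_sumr sumr_delta -/U.
by move: lamE; lra.
Qed.

(* Unless u is constant on P, f m lies strictly between f (u j0) and f (u j1)
   for some j0, j1 in P, and shifting mass towards one of them reaches f m. *)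
Lemma distr_on_avg_comp P q u (f : R -> R) : {homo f : x y / x < y} ->
  distr_on P q ->
  exists2 p, distr_on P p & \sum_i p i * f (u i) = f (\sum_i q i * u i).
Proof.
move=> f_incr qP; set m := \sum_i q i * u i.
have q_distr := distr_onW qP; have q_gt0 := distr_on_gt0 qP.
have const_on_P : (forall i, P i -> u i <= m) \/ (forall i, P i -> m <= u i) ->
    forall i, P i -> u i = m.
  case=> [u_le|u_ge] i Pi.
    apply: (convex_comb_eq_ub q_distr) => //; last by rewrite q_gt0.
    by move=> k; rewrite q_gt0; apply: u_le.
  apply: oppr_inj; apply: (convex_comb_eq_ub (g := fun k => - u k) q_distr).
  - by move=> k; rewrite q_gt0 lerN2; apply: u_ge.
  - by rewrite -sumrN; apply: eq_bigr => k _; rewrite mulrN.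
  - by rewrite q_gt0.
have [/existsP[j0 /andP[Pj0 lt0]]|no_lt] := boolP [exists j, P j && (u j < m)].
  have [/existsP[j1 /andP[Pj1 lt1]]|no_gt] := boolP [exists j, P j && (m < u j)].
    have [le_fm|lt_fm] := lerP (f m) (\sum_i q i * f (u i)).
      by apply: (distr_on_mix_between qP Pj0); rewrite (f_incr _ _ lt0) le_fm.
    by apply: (distr_on_mix_between qP Pj1); rewrite (ltW lt_fm) (f_incr _ _ lt1) orbT.
  have u_le i : P i -> u i <= m.
    by move=> Pi; rewrite leNgt; apply: contraNN no_gt => lt; apply/existsP; exists i; rewrite Pi.
  by move: lt0; rewrite (const_on_P (or_introl u_le)) ?ltxx.
have u_ge i : P i -> m <= u i.
  by move=> Pi; rewrite leNgt; apply: contraNN no_lt => lt; apply/existsP; exists i; rewrite Pi.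
have u_const := const_on_P (or_intror u_ge).
exists q => //; have [_ qN q1] := qP.
rewrite -[RHS]mul1r -q1 mulr_suml; apply: eq_bigr => i _.
by have [/u_const->|/qN->] := boolP (P i); rewrite ?mul0r.
Qed.

End ConvexCombinations.

Section PiecewiseLinear.
Variables (R : realFieldType) (n : nat) (x y : nat -> R).
Hypotheses (x0 : x 0 = 0) (y0 : y 0 = 0).
Hypothesis x_incr : forall k, (k < n)%N -> x k < x k.+1.
Hypothesis y_incr : forall k, (k < n)%N -> y k < y k.+1.

Definition slope k := (y k.+1 - y k) / (x k.+1 - x k).

Definition min_slope := \big[Num.min/1]_(k < n) slope k.

Definition clamp (u a b : R) := Num.min (Num.max u a) b.

(* The interpolant of the points (x k, y k), written as a line of slope
   [min_slope] plus, on each segment, the excess slope of that segment, so that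
   it is strictly increasing on the whole line. *)
Definition pwlin (u : R) : R :=
  min_slope * u + \sum_(k < n) (slope k - min_slope) * (clamp u (x k) (x k.+1) - x k).

Lemma slope_gt0 k : (k < n)%N -> 0 < slope k.
Proof. by move=> kn; rewrite divr_gt0 // subr_gt0 ?x_incr ?y_incr. Qed.

Lemma min_slope_gt0 : 0 < min_slope.
Proof. by apply: lt_bigmin => // k _; apply: slope_gt0. Qed.

Lemma min_slope_le k : (k < n)%N -> min_slope <= slope k.
Proof. by move=> kn; exact: (bigmin_le _ (Ordinal kn)). Qed.

Lemma clamp_le u v a b : u <= v -> clamp u a b <= clamp v a b.
Proof.
move=> le_uv; rewrite /clamp le_min !ge_min lexx orbT andbT.
by rewrite ge_max !le_max le_uv lexx !orbT.
Qed.

Lemma pwlin_incr : {homo pwlin : u v / u < v}.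
Proof.
move=> u v lt_uv; apply: ltr_leD; first by rewrite ltr_pM2l ?min_slope_gt0.
apply: ler_sum => k _; apply: ler_wpM2l; first by rewrite subr_ge0 min_slope_le.
by rewrite lerD2r clamp_le ?ltW.
Qed.

Lemma ler_pwlin : {mono pwlin : u v / u <= v}.
Proof. exact: le_mono pwlin_incr. Qed.

Lemma x_le i j : (i <= j <= n)%N -> x i <= x j.
Proof.
case/andP=> + jn; elim: j jn => [|j IH] jn; first by rewrite leqn0 => /eqP->.
rewrite leq_eqVlt ltnS => /orP[/eqP->//|ij].
exact: le_trans (IH (ltnW jn) ij) (ltW (x_incr jn)).
Qed.

Lemma clamp_node k j : (k <= n)%N -> (j < n)%N ->
  clamp (x k) (x j) (x j.+1) - x j = if (j < k)%N then x j.+1 - x j else 0.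
Proof.
move=> kn jn; rewrite /clamp; case: ifP => jk.
  by rewrite max_l ?min_r ?x_le ?jk ?kn // ltnW.
have kj : (k <= j)%N by rewrite leqNgt jk.
by rewrite max_r ?min_l ?subrr ?(ltW (x_incr jn)) // x_le // kj ltnW.
Qed.

Lemma pwlin_node k : (k <= n)%N -> pwlin (x k) = y k.
Proof.
move=> kn; rewrite /pwlin.
have -> : \sum_(j < n) (slope j - min_slope) * (clamp (x k) (x j) (x j.+1) - x j) =
    \sum_(0 <= j < n) (if (j < k)%N then (y j.+1 - y j) - min_slope * (x j.+1 - x j)
                      else 0).
  rewrite big_mkord; apply: eq_bigr => j _; rewrite clamp_node //.
  case: ifP => _; last by rewrite mulr0.
  by rewrite mulrBl /slope divfK // subr_eq0 gt_eqF ?x_incr.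
rewrite (big_cat_nat (leq0n k) kn) /= [X in _ + (_ + X)]big_nat_cond.
rewrite [X in _ + (_ + X)]big1 ?addr0; last first.
  by move=> j /andP[/andP[kj _] _]; rewrite ltnNge kj.
rewrite (eq_big_nat _ _ (F2 := fun j => (y j.+1 - y j) - min_slope * (x j.+1 - x j)));
  last by move=> j /andP[_ ->].
rewrite sumrB telescope_sumr // -mulr_sumr telescope_sumr // x0 y0 !subr0.
by rewrite addrC subrK.
Qed.

Lemma pwlin0 : pwlin 0 = 0.
Proof. by rewrite -{1}x0 pwlin_node. Qed.

End PiecewiseLinear.

Section SupRange.
Variable R : realType.
Implicit Types (a : nat -> R).

Lemma sup_range_ub a B : (forall k, a k <= B) -> forall k, a k <= sup (range a).
Proof. by move=> a_le k; apply: ub_le_sup; [exists B => _ [j _ <-] | exists k]. Qed.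

Lemma sup_range_le a B : (forall k, a k <= B) -> sup (range a) <= B.
Proof. by move=> a_le; apply: ge_sup; [exists (a 0%N), 0%N | move=> _ [j _ <-]]. Qed.

Lemma sum_sup_range_le (I : finType) (P : pred I) (c : I -> R) (a : I -> nat -> R) B X :
  (forall i, P i -> 0 <= c i) -> (forall i k, a i k <= a i k.+1) ->
  (forall i k, a i k <= B) -> (forall k, \sum_(i | P i) c i * a i k <= X) ->
  \sum_(i | P i) c i * sup (range (a i)) <= X.
Proof.
move=> c_ge0 a_incr a_le sum_le; apply/ler_addgt0Pr => e e_gt0.
set C := \sum_(i | P i) c i + 1.
have C_gt0 : 0 < C by rewrite ltr_wpDl ?sumr_ge0.
have /choice[K near_sup] : forall i, exists k, sup (range (a i)) - e / C < a i k.
  move=> i; have sup_i : has_sup (range (a i)).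
    by split; [exists (a i 0%N), 0%N | exists B => _ [k _ <-]].
  have [_ [k _ <-] lt_k] := sup_adherent (divr_gt0 e_gt0 C_gt0) sup_i.
  by exists k.
set k := (\max_i K i)%N.
apply: (@le_trans _ _ (\sum_(i | P i) c i * (a i k + e / C))).
  apply: ler_sum => i Pi; rewrite ler_wpM2l ?c_ge0 // -lerBlDr ltW //.
  apply: lt_le_trans (near_sup i) _.
  exact: (homo_leq (r := fun u v => u <= v) lexx le_trans (a_incr i) (leq_bigmax i)).
under eq_bigr do rewrite mulrDr.
rewrite big_split /= lerD ?sum_le // -mulr_suml mulrA ler_pdivrMr //.
by rewrite [X in X <= _]mulrC ler_pM2l // lerDl.
Qed.

End SupRange.

Section ReachProbabilities.
Variables (S : finType) (P : S -> S -> Real).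
Hypothesis P_ge0 : forall s s', 0 <= P s s'.
Hypothesis P_sum1 : forall s, \sum_s' P s s' = 1.

Lemma reachn_ge0 k s t : 0 <= reachn P k s t.
Proof.
elim: k s => [|k IH] s /=; first by case: (s == t).
by case: ifP => // _; apply: sumr_ge0 => s' _; apply: mulr_ge0.
Qed.

Lemma reachn_le1 k s t : reachn P k s t <= 1.
Proof.
elim: k s => [|k IH] s /=; first by case: (s == t).
case: ifP => // _; rewrite -(P_sum1 s); apply: ler_sum => s' _.
by rewrite ler_piMr.
Qed.

Lemma reachn_incr k s t : reachn P k s t <= reachn P k.+1 s t.
Proof.
elim: k s => [|k IH] s /=.
  by case: eqP => //= _; apply: sumr_ge0 => s' _; rewrite mulr_ge0 ?reachn_ge0.
by case: ifP => // _; apply: ler_sum => s' _; apply: ler_wpM2l.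
Qed.

Lemma reachn_le_reach k s t : reachn P k s t <= reach P s t.
Proof. exact: (sup_range_ub (fun k => reachn_le1 k s t)). Qed.

Lemma reach_le s t B : (forall k, reachn P k s t <= B) -> reach P s t <= B.
Proof. exact: sup_range_le. Qed.

Lemma reachn_absorbing k s t : (forall s', P s s' = (s' == s)%:R) ->
  reachn P k s t = (s == t)%:R.
Proof.
move=> P_s; elim: k => [|k IH] //=; move: IH; case: eqP => // _ IH.
by under eq_bigr do rewrite P_s; rewrite sumr_delta IH.
Qed.

Lemma reach_absorbing s t : (forall s', P s s' = (s' == s)%:R) ->
  reach P s t = (s == t)%:R.
Proof.
move=> /reachn_absorbing reachn_s; apply/eqP.
rewrite eq_le reach_le => [|k]; last by rewrite reachn_s.
by rewrite -(reachn_s 0%N t) reachn_le_reach.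
Qed.

End ReachProbabilities.

Section Certificates.
Variables (S A : finType) (D : S -> A -> S -> bool) (T : {set S})
  (rho : S -> rat) (z : S) (val : S -> A -> S -> Real).

Local Notation row := (Defs.row D z val).
Local Notation chain := (chain D T z val).
Local Notation RewS := (RewS D T rho z val).
Local Notation Rew := (Rew D T rho z val).
Local Notation Rstar := (Rstar D T rho z val).

Definition weight t : Real := ratr (rho t).

Definition qvalue (f : S -> Real) s a := \sum_s' row s a s' * f s'.

Definition RewSn (σ : {ffun S -> A}) k s :=
  \sum_(t in T) weight t * reachn (chain σ) k s t.

(* The rank condition rules out end components that keep positive value
   without ever reaching a target. *)
Record certificate (h : S -> Real) (σ : {ffun S -> A}) (r : S -> nat) : Prop := {
  cert_ge0 : forall s, 0 <= h s;
  cert_target : forall t, t \in T -> h t = weight t;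
  cert_super : forall s a, s \notin T -> qvalue h s a <= h s;
  cert_harmonic : forall s, s \notin T -> qvalue h s (σ s) = h s;
  cert_progress : forall s, s \notin T -> 0 < h s ->
    exists2 s', 0 < row s (σ s) s' & [\/ s' \in T, h s' = 0 | (r s' < r s)%N]
}.

Lemma Rstar_eq v c : (forall σ, Rew σ v <= c) -> (exists σ, Rew σ v = c) ->
  Rstar v = c.
Proof.
move=> Rew_le [σ0 Rew_σ0]; rewrite /Defs.Rstar; case: pickP => [σ1 _|]; last by move/(_ σ0).
apply/eqP; rewrite eq_le bigmax_le //= -Rew_σ0.
exact: (le_bigmax _ (fun σ => Rew σ v)).
Qed.

Hypothesis val_gp : graph_preserving D T val.
Hypothesis rho_ge0 : forall t, t \in T -> 0 <= rho t.

Lemma weight_ge0 t : t \in T -> 0 <= weight t.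
Proof. by move=> tT; rewrite ler0q rho_ge0. Qed.

Lemma row_distr s a : s \notin T -> is_distr (row s a).
Proof.
move=> sT; rewrite /Defs.row; have [succ|nosucc] := boolP [exists s', D s a s'].
  by have [*] := val_gp sT succ; apply: (@distr_onW _ _ (D s a)).
split=> [s'|]; first by case: (s' == z).
by under eq_bigr do rewrite -[(_ == _)%:R]mulr1; rewrite sumr_delta.
Qed.

Lemma row_ge0 s a s' : s \notin T -> 0 <= row s a s'.
Proof. by move=> sT; apply: (row_distr a sT).1. Qed.

Lemma chain_distr σ s : is_distr (chain σ s).
Proof.
rewrite /Defs.chain; have [sT|sT] := boolP (s \in T); last exact: row_distr.
split=> [s'|]; first by case: (s' == s).
by under eq_bigr do rewrite -[(_ == _)%:R]mulr1; rewrite sumr_delta.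
Qed.

Lemma chain_ge0 σ s s' : 0 <= chain σ s s'.
Proof. exact: (chain_distr σ s).1. Qed.

Lemma chain_sum1 σ s : \sum_s' chain σ s s' = 1.
Proof. exact: (chain_distr σ s).2. Qed.

Lemma qvalue_le f g s a : s \notin T -> (forall s', f s' <= g s') ->
  qvalue f s a <= qvalue g s a.
Proof. by move=> sT f_le; apply: ler_sum => s' _; rewrite ler_wpM2l ?row_ge0. Qed.

Lemma notin_target_neq s t : s \notin T -> t \in T -> (s == t) = false.
Proof. by move=> sT tT; apply: contraNF sT => /eqP->. Qed.

Lemma sum_weight_delta s : s \in T -> \sum_(t in T) weight t * (s == t)%:R = weight s.
Proof.
move=> sT; rewrite (bigD1 s) //= eqxx mulr1 big1 ?addr0 // => t /andP[_ ts].
by rewrite eq_sym (negPf ts) mulr0.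
Qed.

Lemma chain_target σ s : s \in T -> forall s', chain σ s s' = (s' == s)%:R.
Proof. by move=> sT s'; rewrite /Defs.chain sT. Qed.

Lemma RewSn_target σ k s : s \in T -> RewSn σ k s = weight s.
Proof.
move=> sT; rewrite /RewSn -(sum_weight_delta sT); apply: eq_bigr => t _.
by rewrite reachn_absorbing //; apply: chain_target.
Qed.

Lemma RewSn0 σ s : s \notin T -> RewSn σ 0 s = 0.
Proof. by move=> sT; rewrite /RewSn big1 // => t tT /=; rewrite notin_target_neq ?mulr0. Qed.

Lemma RewSnS σ k s : s \notin T -> RewSn σ k.+1 s = qvalue (RewSn σ k) s (σ s).
Proof.
move=> sT; rewrite /RewSn /qvalue.
under eq_bigr => t tT do rewrite /= notin_target_neq // /Defs.chain (negPf sT) mulr_sumr.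
rewrite exchange_big /=; apply: eq_bigr => s' _.
by rewrite mulr_sumr; apply: eq_bigr => t _; rewrite mulrCA.
Qed.

Lemma RewSn_le_RewS σ k s : RewSn σ k s <= RewS σ s.
Proof.
apply: ler_sum => t tT; rewrite ler_wpM2l ?weight_ge0 //.
exact: reachn_le_reach (chain_ge0 σ) (chain_sum1 σ) k s t.
Qed.

Lemma RewS_ge0 σ s : 0 <= RewS σ s.
Proof.
apply: sumr_ge0 => t tT; rewrite mulr_ge0 ?weight_ge0 //.
apply: le_trans (reachn_le_reach (chain_ge0 σ) (chain_sum1 σ) 0 s t).
exact: reachn_ge0 (chain_ge0 σ) 0 s t.
Qed.

Lemma RewS_le σ s B : (forall k, RewSn σ k s <= B) -> RewS σ s <= B.
Proof.
move=> RewSn_le; apply: (sum_sup_range_le (B := 1)) => // [t|t k|t k].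
- exact: weight_ge0.
- exact: reachn_incr (chain_ge0 σ) k s t.
- exact: reachn_le1 (chain_ge0 σ) (chain_sum1 σ) k s t.
Qed.

Lemma RewS_target σ s : s \in T -> RewS σ s = weight s.
Proof.
move=> sT; rewrite /Defs.RewS -(sum_weight_delta sT); apply: eq_bigr => t _.
by rewrite reach_absorbing //; [exact: chain_ge0 | exact: chain_sum1 | apply: chain_target].
Qed.

Lemma RewS_harmonic σ s : s \notin T -> RewS σ s = qvalue (RewS σ) s (σ s).
Proof.
move=> sT; apply/eqP; rewrite eq_le; apply/andP; split.
  apply: RewS_le => -[|k]; last by rewrite RewSnS // qvalue_le // => s'; apply: RewSn_le_RewS.
  by rewrite RewSn0 // sumr_ge0 // => s' _; rewrite mulr_ge0 ?row_ge0 ?RewS_ge0.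
have -> : qvalue (RewS σ) s (σ s) =
    \sum_(t in T) weight t * \sum_s' row s (σ s) s' * reach (chain σ) s' t.
  rewrite /qvalue /Defs.RewS; under eq_bigr do rewrite mulr_sumr.
  rewrite exchange_big /=; apply: eq_bigr => t _.
  by rewrite mulr_sumr; apply: eq_bigr => s' _; rewrite mulrCA.
apply: ler_sum => t tT; rewrite ler_wpM2l ?weight_ge0 //.
apply: (sum_sup_range_le (B := 1)) => [s' _|s' k|s' k|k]; first exact: row_ge0.
- exact: reachn_incr (chain_ge0 σ) k s' t.
- exact: reachn_le1 (chain_ge0 σ) (chain_sum1 σ) k s' t.
apply: le_trans (reachn_le_reach (chain_ge0 σ) (chain_sum1 σ) k.+1 s t).
by rewrite /= notin_target_neq //; apply: ler_sum => s' _; rewrite /Defs.chain (negPf sT).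
Qed.

Section FromCertificate.
Variables (h : S -> Real) (σ : {ffun S -> A}) (r : S -> nat).
Hypothesis cert : certificate h σ r.

Lemma RewS_le_cert σ' s : RewS σ' s <= h s.
Proof.
apply: RewS_le => k; elim: k s => [|k IH] s;
  have [sT|sT] := boolP (s \in T); try by rewrite RewSn_target ?(cert_target cert).
  by rewrite RewSn0 ?(cert_ge0 cert).
by rewrite RewSnS //; apply: le_trans (cert_super cert (σ' s) sT); apply: qvalue_le.
Qed.

Lemma RewS_cert s : RewS σ s = h s.
Proof.
pose g x := h x - RewS σ x.
have g_ge0 x : 0 <= g x by rewrite subr_ge0 RewS_le_cert.
have g_target x : x \in T -> g x = 0.
  by move=> xT; rewrite /g RewS_target ?(cert_target cert) ?subrr.
have g_h0 x : h x = 0 -> g x = 0.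
  by move=> hx0; apply/eqP; rewrite eq_le g_ge0 /g hx0 sub0r oppr_le0 RewS_ge0.
have g_harmonic x : x \notin T -> g x = qvalue g x (σ x).
  move=> xT; rewrite /g -{1}(cert_harmonic cert xT) (RewS_harmonic _ xT) /qvalue -sumrB.
  by apply: eq_bigr => s' _; rewrite mulrBr.
apply/eqP; rewrite eq_le RewS_le_cert /= -subr_le0 -/(g s) leNgt; apply/negP => g_gt0.
(* The gap g is harmonic along sigma, so at a state of maximal gap and, among
   those, minimal rank, the progress successor has the same gap: contradiction. *)
have [y _ y_max] := arg_maxP g (isT : predT s).
have [x1 /eqP gx1 x1_min] := arg_minnP r (eqxx (g y) : (fun x => g x == g y) y).
have gy_gt0 : 0 < g y := lt_le_trans g_gt0 (y_max s isT).
have x1T : x1 \notin T by apply: contraTN gy_gt0 => /g_target; rewrite -gx1 => ->; rewrite ltxx.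
have hx1 : 0 < h x1.
  rewrite lt_def (cert_ge0 cert) andbT; apply: contraTN gy_gt0 => /eqP/g_h0.
  by rewrite -gx1 => ->; rewrite ltxx.
have [s' row_pos prog] := cert_progress cert x1T hx1.
have gs' : g s' = g y.
  apply: (convex_comb_eq_ub (row_distr _ x1T)) row_pos => [q _|]; first exact: y_max.
  by rewrite -gx1 (g_harmonic _ x1T).
case: prog => [/g_target|/g_h0|lt_r]; try by rewrite gs' => g0; rewrite g0 ltxx in gy_gt0.
by have := x1_min s' (introT eqP gs'); rewrite leqNgt lt_r.
Qed.

Lemma Rstar_cert_state s : Rstar (inl s) = h s.
Proof. by apply: Rstar_eq => [σ'|]; [apply: RewS_le_cert | exists σ; apply: RewS_cert]. Qed.

Lemma Rstar_cert_pair s a : s \notin T -> Rstar (inr (s, a)) = qvalue h s a.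
Proof.
move=> sT; apply: Rstar_eq => [σ'|]; first by apply: qvalue_le => // s'; apply: RewS_le_cert.
by exists σ; apply: eq_bigr => s' _; rewrite RewS_cert.
Qed.

End FromCertificate.

Section ValueIteration.

Fixpoint value_iter k s : Real :=
  if s \in T then weight s else
  if k is k'.+1 then \big[Num.max/0]_a qvalue (value_iter k') s a else 0.

Definition value s := sup (range (value_iter ^~ s)).

Definition weight_bound := \big[Num.max/0]_(t in T) weight t.

Lemma value_iter_ge0 k s : 0 <= value_iter k s.
Proof. by case: k => [|k] /=; case: ifP => // sT; rewrite ?bigmax_ge_id ?weight_ge0. Qed.

Lemma value_iter_le_bound k s : value_iter k s <= weight_bound.
Proof.
elim: k s => [|k IH] s /=; case: ifPn => sT; rewrite ?le_bigmax_cond ?bigmax_ge_id //.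
apply: bigmax_le => [|a _]; first exact: bigmax_ge_id.
rewrite -[weight_bound]mul1r -(row_distr a sT).2 mulr_suml.
by apply: ler_sum => s' _; rewrite ler_wpM2l ?row_ge0.
Qed.

Lemma value_iter_incr k s : value_iter k s <= value_iter k.+1 s.
Proof.
elim: k s => [|k IH] s /=; case: ifPn => sT //; first exact: bigmax_ge_id.
apply: bigmax_le => [|a _]; first exact: bigmax_ge_id.
by apply: le_trans (le_bigmax _ (fun a => qvalue _ s a) a); apply: qvalue_le.
Qed.

Lemma value_iter_le_value k s : value_iter k s <= value s.
Proof. exact: (sup_range_ub (value_iter_le_bound ^~ s)). Qed.

Lemma value_ge0 s : 0 <= value s.
Proof. exact: le_trans (value_iter_ge0 0 s) (value_iter_le_value 0 s). Qed.

Lemma value_target s : s \in T -> value s = weight s.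
Proof.
move=> sT; apply/eqP; rewrite eq_le.
have := value_iter_le_value 0 s; rewrite /= sT => ->.
by rewrite andbT; apply: sup_range_le => -[|k] /=; rewrite sT.
Qed.

Lemma value_super s a : s \notin T -> qvalue value s a <= value s.
Proof.
move=> sT; apply: (sum_sup_range_le (a := fun s' k => value_iter k s') (B := weight_bound))
  => [s' _|s' k|s' k|k].
- exact: row_ge0.
- exact: value_iter_incr.
- exact: value_iter_le_bound.
apply: le_trans (value_iter_le_value k.+1 s); rewrite /= (negPf sT).
exact: (le_bigmax _ (fun a => qvalue _ s a) a).
Qed.

Lemma value_bellman s : s \notin T -> value s = \big[Num.max/0]_a qvalue value s a.
Proof.
move=> sT; apply/eqP; rewrite eq_le; apply/andP; split; last first.
  by apply: bigmax_le => [|a _]; [exact: value_ge0 | exact: value_super].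
apply: sup_range_le => -[|k] /=; rewrite (negPf sT) ?bigmax_ge_id //.
apply: bigmax_le => [|a _]; first exact: bigmax_ge_id.
apply: le_trans (le_bigmax _ (fun a => qvalue value s a) a).
by apply: qvalue_le => // s'; apply: value_iter_le_value.
Qed.

Variable a0 : A.

Lemma exists_optimal_action s : s \notin T -> exists a, qvalue value s a = value s.
Proof.
move=> sT; have qvalue_ge0 a : true -> 0 <= qvalue value s a.
  by move=> _; apply: sumr_ge0 => s' _; rewrite mulr_ge0 ?row_ge0 ?value_ge0.
have [a _ max_a] := eq_bigmax a0 xpredT (fun a => qvalue value s a) isT qvalue_ge0.
by exists a; rewrite value_bellman // max_a.
Qed.

Lemma optimal_class_empty (C : {set S}) m : 0 < m ->
  (forall x, x \in C -> x \notin T /\ value x = m) ->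
  (forall x a s', x \in C -> qvalue value x a = m -> 0 < row x a s' -> s' \in C) ->
  forall x, x \notin C.
Proof.
move=> m_gt0 C_val C_closed x0; apply/negP => x0C.
pose gap := \big[Num.min/m]_(p : S * A | (p.1 \in C) && (qvalue value p.1 p.2 != m))
  (m - qvalue value p.1 p.2).
have gap_gt0 : 0 < gap.
  apply: lt_bigmin => // -[x a] /andP[/= xC neq_m]; have [xT val_x] := C_val x xC.
  by rewrite subr_gt0 lt_neqAle neq_m -val_x value_super.
have gap_le_m : gap <= m := bigmin_le_id _ _ _ _.
(* A non-optimal action on C loses at least [gap] and optimal ones stay in C,
   so value iteration stays below [m - gap] on C. *)
have iter_le k x : x \in C -> value_iter k x <= m - gap.
  elim: k x => [|k IH] x xC; have [xT val_x] := C_val x xC; rewrite /= (negPf xT).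
    by rewrite subr_ge0.
  apply: bigmax_le => [|a _]; first by rewrite subr_ge0.
  have [opt|nopt] := eqVneq (qvalue value x a) m.
    rewrite -[m - gap]mul1r -(row_distr a xT).2 mulr_suml; apply: ler_sum => s' _.
    have := row_ge0 a s' xT; rewrite le_eqVlt => /orP[/eqP<-|pos]; first by rewrite !mul0r.
    by apply: ler_wpM2l; [exact: ltW | apply: IH; exact: C_closed opt pos].
  apply: le_trans (qvalue_le a xT (value_iter_le_value k)) _.
  have : gap <= m - qvalue value x a by apply: (@bigmin_le_cond _ _ _ _ (x, a)); rewrite /= xC nopt.
  lra.
have := sup_range_le (fun k => iter_le k x0 x0C); rewrite -/(value x0).
by have [_ ->] := C_val x0 x0C; lra.
Qed.

Fixpoint optimal_reach j s : bool :=
  if j is j'.+1 then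
    optimal_reach j' s || [exists a, (qvalue value s a == value s) &&
                              [exists s', (0 < row s a s') && optimal_reach j' s']]
  else (s \in T) || (value s == 0).

Lemma optimal_reach_exists s : exists j, optimal_reach j s.
Proof.
(* Otherwise the never-reaching states of maximal value form a class closed
   under optimal moves. *)
apply: contrapT => never.
pose Z := [set x | ~~ `[< exists j, optimal_reach j x >]].
have Z_val x : x \in Z -> x \notin T /\ 0 < value x.
  rewrite inE => /asboolPn never_x.
  have : ~~ optimal_reach 0 x by apply/negP => reach0; apply: never_x; exists 0%N.
  by rewrite negb_or lt_def value_ge0 andbT => /andP[].
have Z_closed x a s' : x \in Z -> qvalue value x a = value x -> 0 < row x a s' -> s' \in Z.
  rewrite !inE => /asboolPn never_x opt pos; apply/asboolPn => -[j reach_j]; apply: never_x.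
  exists j.+1; apply/orP; right; apply/existsP; exists a.
  by rewrite opt eqxx; apply/existsP; exists s'; rewrite pos.
have sZ : s \in Z by rewrite inE; apply/asboolPn.
have [x1 x1Z x1_max] := arg_maxP value sZ; have {}x1Z : x1 \in Z := x1Z.
have [x1T m_gt0] := Z_val x1 x1Z.
pose C := [set x in Z | value x == value x1].
suff /(_ x1) : forall x, x \notin C by rewrite inE x1Z eqxx.
apply: (optimal_class_empty m_gt0) => [x|x a s']; rewrite inE => /andP[xZ /eqP val_x].
  by have [xT _] := Z_val x xZ.
move=> opt pos; have s'Z := Z_closed x a s' xZ (etrans opt (esym val_x)) pos.
rewrite inE s'Z -val_x; apply/eqP.
have [xT _] := Z_val x xZ.
apply: (convex_comb_eq_ub (row_distr a xT)) pos => [y pos_y|]; last by rewrite val_x.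
by rewrite val_x; apply: x1_max; apply: (Z_closed x a y xZ) => //; rewrite val_x.
Qed.

Lemma certificate_exists : exists h σ r, certificate h σ r.
Proof.
pose r x := ex_minn (optimal_reach_exists x).
have good_action x : exists a, x \notin T -> qvalue value x a = value x /\ (0 < value x ->
    exists2 s', 0 < row x a s' & [\/ s' \in T, value s' = 0 | (r s' < r x)%N]).
  have [xT|xT] := boolP (x \in T); first by exists a0.
  have [a opt_a] := exists_optimal_action xT.
  have [pos|] := ltP 0 (value x); last by exists a => _; split=> // _ /lt_geF->.
  rewrite /r; case: ex_minnP => -[|j] reach_j j_min.
    by move: reach_j; rewrite /= (negPf xT) gt_eqF.
  move: reach_j => /= /orP[/j_min|]; first by rewrite ltnn.
  case/existsP=> b /andP[/eqP opt_b /existsP[s' /andP[pos_s' reach_s']]].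
  exists b => _; split=> // _; exists s' => //; apply: Or33.
  by case: ex_minnP => j' _; apply.
have [σ σ_good] := choice good_action.
exists value, [ffun x => σ x], r; split.
- exact: value_ge0.
- exact: value_target.
- exact: value_super.
- by move=> s sT; rewrite ffunE; case: (σ_good s sT).
- by move=> s sT; rewrite ffunE; case: (σ_good s sT).
Qed.

End ValueIteration.
End Certificates.

Section Gadget.
Variables (S A : finType) (D : S -> A -> S -> bool) (T : {set S}) (rho : S -> rat)
  (n : nat) (t : 'I_n.+1 -> S).
Hypothesis targets_abs : targets_absorbing D T.
Hypothesis T_def : T = [set t i | i : 'I_n.+1].
Hypothesis rho_t0 : rho (t ord0) = 0.
Hypothesis rho_t_incr : forall i j : 'I_n.+1, (i < j)%N -> rho (t i) < rho (t j).

Local Notation z := (t ord0).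
Local Notation ND := (ND D t).
Local Notation NT := (NT S).
Local Notation Nrho := (Nrho (S:=S)).
Local Notation fin := (fin S).
Local Notation fail := (fail S).
Local Notation prev i := (inord (n' := n) i.-1).

Lemma t_inj : injective t.
Proof.
move=> i j tij; apply/eqP; apply: contraTT (eqxx (rho (t i))).
by rewrite neq_ltn => /orP[] /rho_t_incr; rewrite tij => /lt_eqF->.
Qed.

Lemma t_in_T i : t i \in T.
Proof. by rewrite T_def imset_f. Qed.

Lemma T_t s : s \in T -> exists i, s = t i.
Proof. by rewrite T_def => /imsetP[i _ ->]; exists i. Qed.

Lemma rho_ge0 s : s \in T -> 0 <= rho s.
Proof.
move=> /T_t[i ->]; rewrite -rho_t0; case: (posnP i) => [i0|i_gt0].
  by rewrite (_ : i = ord0) //; apply: val_inj.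
exact: ltW (@rho_t_incr ord0 i i_gt0).
Qed.

Lemma Nrho_ge0 x : x \in NT -> 0 <= Nrho x.
Proof. by move=> _; rewrite /Nrho; case: ifP. Qed.

Lemma fin_in_NT : fin \in NT. Proof. by rewrite !inE eqxx. Qed.
Lemma fail_in_NT : fail \in NT. Proof. by rewrite !inE eqxx orbT. Qed.
Lemma inl_notin_NT s : (inl s : NS S) \notin NT. Proof. by rewrite !inE. Qed.

Lemma target_no_succ s a : s \in T -> [exists s', D s a s'] = false.
Proof. by move=> sT; apply/negbTE/existsP => -[s']; apply/negP/targets_abs. Qed.

Lemma ND_some s a y : ND (inl s) (Some a) y = if y is inl s' then D s a s' else false.
Proof. by case: y => [s'|[]]. Qed.

Lemma exists_ND_some s a : [exists y, ND (inl s) (Some a) y] = [exists s', D s a s'].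
Proof.
apply/existsP/existsP => [[[s'|[]] //]|[s' succ]]; first by exists s'.
by exists (inl s').
Qed.

Lemma ND_none_nontarget s y : s \notin T -> ND (inl s) None y = false.
Proof.
move=> sT; apply: contraNF sT; case: y => [s'|[]] /=.
- by case/existsP=> i /and3P[_ /eqP-> _]; apply: t_in_T.
- by case/existsP=> i /andP[_ /eqP->]; apply: t_in_T.
- by move/eqP->; apply: t_in_T.
Qed.

Lemma ND_none_t i y : ND (inl (t i)) None y =
  if (i : nat) == 0%N then y == fail else (y == fin) || (y == inl (t (prev i))).
Proof.
have t_eq j : (t i == t j) = (i == j) := inj_eq t_inj i j.
case: y => [s'|[]] /=.
- apply/existsP/idP => [[j /and3P[j_gt0 /eqP/t_inj-> /eqP->]]|].
    by rewrite eqn0Ngt j_gt0 /=; apply/eqP.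
  case: ifPn => // i0 /= /eqP[->].
  by exists i; rewrite lt0n i0 !eqxx.
- apply/existsP/idP => [[j /andP[j_gt0 /eqP/t_inj->]]|]; first by rewrite eqn0Ngt j_gt0.
  by case: ifPn => // i0 _; exists i; rewrite lt0n i0 eqxx.
- rewrite t_eq; case: ifPn => [/eqP i0|/negPf i0]; first by apply/eqP/val_inj.
  by apply: contraFF i0 => /eqP->.
Qed.

Lemma pick_t i : [pick j | t j == t i] = Some i.
Proof. by case: pickP => [j /eqP/t_inj-> //|/(_ i)]; rewrite eqxx. Qed.

Lemma prev_lt (i : 'I_n.+1) : (i : nat) != 0%N -> (prev i < i)%N.
Proof.
by rewrite -lt0n => i_gt0; rewrite inordK prednK // ltnW.
Qed.

Section LiftValuation.
Variable val : S -> A -> S -> Real.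
Hypothesis val_gp : graph_preserving D T val.
Variables (h : S -> Real) (σ : {ffun S -> A}) (r : S -> nat).
Hypothesis cert : certificate D T rho z val h σ r.

Local Notation qM := (qvalue D z val).

Lemma cert_t0 : h z = 0.
Proof. by rewrite (cert_target cert) ?t_in_T // /weight rho_t0 rmorph0. Qed.

Definition scale : Real := (1 + \sum_(x in T) weight rho x)^-1.

Lemma scale_gt0 : 0 < scale.
Proof. by rewrite invr_gt0 ltr_wpDr // sumr_ge0 // => x /weight_ge0; apply; apply: rho_ge0. Qed.

Lemma scale_cert_lt1 x : x \in T -> scale * h x < 1.
Proof.
move=> xT; have sum_ge0 : 0 <= \sum_(y in T) weight rho y.
  by apply: sumr_ge0 => y yT; apply: weight_ge0 yT; apply: rho_ge0.
rewrite (cert_target cert) // mulrC ltr_pdivrMr ?ltr_wpDr // mul1r ltr_pwDl //.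
by rewrite (bigD1 x) //= lerDl sumr_ge0 // => y /andP[yT _]; apply: weight_ge0 yT; apply: rho_ge0.
Qed.

(* From t_i, reaching fin with probability p and t_(i-1) otherwise yields
   p + (1 - p) * scale * h (t_(i-1)); this p makes it scale * h (t_i). *)
Definition gadget_prob s s' : Real := (scale * h s - scale * h s') / (1 - scale * h s').

Lemma gadget_prob_bounds (i : 'I_n.+1) : (i : nat) != 0%N ->
  0 < gadget_prob (t i) (t (prev i)) < 1.
Proof.
move=> i0; have lt_prev : scale * h (t (prev i)) < scale * h (t i).
  by rewrite ltr_pM2l ?scale_gt0 // !(cert_target cert) ?t_in_T // ltr_rat rho_t_incr ?prev_lt.
have := scale_cert_lt1 (t_in_T (prev i)); have := scale_cert_lt1 (t_in_T i) => lt1 lt1'.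
by rewrite divr_gt0 ?subr_gt0 //= ltr_pdivrMr ?subr_gt0 // mul1r; lra.
Qed.

Definition gadget_val (x : NS S) (b : NA A) (y : NS S) : Real :=
  match x, b with
  | inl s, Some a => if y is inl s' then val s a s' else 0
  | inl s, None =>
      if [pick i | t i == s] is Some i then
        if (i : nat) == 0%N then (y == fail)%:R
        else (y == fin)%:R * gadget_prob s (t (prev i)) +
             (y == inl (t (prev i)))%:R * (1 - gadget_prob s (t (prev i)))
      else 0
  | inr _, _ => 0
  end.

Lemma gadget_val_gp : graph_preserving ND NT gadget_val.
Proof.
case=> [s|b] [a|] xNT succ; try by case: b xNT succ; rewrite !inE.
- rewrite exists_ND_some in succ.
  have sT : s \notin T by apply: contraTN succ => /target_no_succ->.
  have [val_pos val0 val1] := val_gp sT succ.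
  split=> [[s'|[]]|[s'|[]]|]; rewrite ?ND_some //=; try exact: val_pos; try exact: val0.
  by rewrite big_sumType /= [X in _ + X]big1 ?addr0.
have [sT|sT] := boolP (s \in T); last first.
  by case/existsP: succ => y; rewrite ND_none_nontarget.
have [i ->] := T_t sT; rewrite /gadget_val pick_t.
have [i0|i0] := eqVneq (i : nat) 0%N.
  split=> [y|y|]; rewrite ?ND_none_t ?i0 /=.
  - by move/eqP->; rewrite eqxx ltr01.
  - by move/negPf->.
  - by under eq_bigr do rewrite -[(_ == _)%:R]mulr1; rewrite sumr_delta.
have /andP[p_gt0 p_lt1] := gadget_prob_bounds i0.
split=> [y|y|]; rewrite ?ND_none_t ?(negPf i0).
- case/orP=> /eqP->; rewrite eqxx /=; first by rewrite mul1r mul0r addr0.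
  by rewrite mul0r add0r mul1r subr_gt0.
- by rewrite negb_or => /andP[/negPf-> /negPf->]; rewrite !mul0r addr0.
- by rewrite big_split /= !sumr_delta addrC subrK.
Qed.

Definition lift_value (x : NS S) : Real :=
  if x is inl s then scale * h s else weight Nrho x.

Lemma lift_value_fail : lift_value fail = 0.
Proof. by rewrite /lift_value /weight /Nrho /= rmorph0. Qed.

Lemma lift_value_fin : lift_value fin = 1.
Proof. by rewrite /lift_value /weight /Nrho /= rmorph1. Qed.

Definition lift_strategy : {ffun NS S -> NA A} :=
  [ffun x => if x is inl s then (if s \in T then None else Some (σ s)) else None].

Definition lift_rank (x : NS S) : nat :=
  if x is inl s then (if s \in T then 0 else (r s).+1) else 0.

Local Notation qN := (qvalue ND fail gadget_val).

Lemma qvalue_lift_some s a : qN lift_value (inl s) (Some a) = scale * qM h s a.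
Proof.
rewrite /qvalue /Defs.row exists_ND_some; case: (boolP [exists s', D s a s']) => _; last first.
  by rewrite !sumr_delta cert_t0 mulr0 lift_value_fail.
rewrite big_sumType /= [X in _ + X]big1 ?addr0 ?mulr_sumr; last by move=> b _; rewrite mul0r.
by apply: eq_bigr => s' _; rewrite mulrCA.
Qed.

Lemma qvalue_lift_none_nontarget s : s \notin T -> qN lift_value (inl s) None = 0.
Proof.
move=> sT; rewrite /qvalue /Defs.row; case: (boolP [exists y, ND (inl s) None y]).
  by case/existsP=> y; rewrite ND_none_nontarget.
by rewrite sumr_delta lift_value_fail.
Qed.

Lemma qvalue_lift_none_t i : qN lift_value (inl (t i)) None = scale * h (t i).
Proof.
rewrite /qvalue /Defs.row; case: (boolP [exists y, ND (inl (t i)) None y]) => [_|]; last first.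
  case/existsP; exists (if (i : nat) == 0%N then fail else fin).
  by rewrite ND_none_t; case: ((i : nat) == 0%N).
rewrite /gadget_val pick_t; have [i0|i0] := eqVneq (i : nat) 0%N.
  have -> : i = ord0 by apply: val_inj.
  by rewrite sumr_delta lift_value_fail cert_t0 mulr0.
under eq_bigr do rewrite mulrDl -!mulrA.
rewrite big_split /= !sumr_delta lift_value_fin mulr1 /= /gadget_prob.
by have := scale_cert_lt1 (t_in_T (prev i)) => lt1; field; lra.
Qed.

Lemma qvalue_cert_target s a : s \in T -> qM h s a = 0.
Proof. by move=> sT; rewrite /qvalue /Defs.row target_no_succ // sumr_delta cert_t0. Qed.

Lemma lift_value_ge0 x : 0 <= lift_value x.
Proof.
case: x => [s|b]; last by rewrite ler0q /Nrho; case: ifP.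
by rewrite mulr_ge0 ?(cert_ge0 cert) ?ltW ?scale_gt0.
Qed.

Lemma lift_progress x : x \notin NT -> 0 < lift_value x ->
  exists2 y, 0 < Defs.row ND fail gadget_val x (lift_strategy x) y &
    [\/ y \in NT, lift_value y = 0 | (lift_rank y < lift_rank x)%N].
Proof.
case: x => [s|b] xNT; last by case: b xNT; rewrite !inE.
rewrite /= ffunE => pos.
have [sT|sT] := boolP (s \in T).
  have [i s_ti] := T_t sT; subst s.
  have i0 : (i : nat) != 0%N.
    by apply: contraTneq pos => i0; rewrite (_ : i = ord0) ?cert_t0 ?mulr0 ?ltxx //; apply: val_inj.
  exists fin; last exact: Or31 fin_in_NT.
  rewrite /Defs.row ifT; last by apply/existsP; exists fin; rewrite ND_none_t (negPf i0).
  rewrite /gadget_val pick_t (negPf i0) eqxx mul1r mul0r addr0.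
  by case/andP: (gadget_prob_bounds i0).
have [s' pos_s' prog] := cert_progress cert sT (etrans (esym (pmulr_rgt0 _ scale_gt0)) pos).
case: (boolP [exists s'', D s (σ s) s'']) => succ; last first.
  exists fail; last exact: Or31 fail_in_NT.
  by rewrite /Defs.row exists_ND_some (negPf succ) eqxx ltr01.
exists (inl s'); first by move: pos_s'; rewrite /Defs.row exists_ND_some succ.
case: prog => [s'T|h0|lt_r]; rewrite /= ?(negPf sT).
- by apply: Or33; rewrite s'T.
- by apply: Or32; rewrite h0 mulr0.
- by apply: Or33; case: (s' \in T).
Qed.

Lemma lift_certificate :
  certificate ND NT Nrho fail gadget_val lift_value lift_strategy lift_rank.
Proof.
split.
- exact: lift_value_ge0.
- by case=> [s|b] //; rewrite (negPf (inl_notin_NT s)).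
- case=> [s|b] [a|] xNT; try by case: b xNT; rewrite !inE.
  + rewrite qvalue_lift_some /= ler_pM2l ?scale_gt0 //.
    have [sT|sT] := boolP (s \in T); last exact: (cert_super cert).
    by rewrite qvalue_cert_target ?(cert_ge0 cert).
  + have [sT|sT] := boolP (s \in T); last by rewrite qvalue_lift_none_nontarget ?lift_value_ge0.
    by have [i ->] := T_t sT; rewrite qvalue_lift_none_t.
- case=> [s|b] xNT; last by case: b xNT; rewrite !inE.
  rewrite ffunE.
  have [sT|sT] := boolP (s \in T); first by have [i ->] := T_t sT; rewrite qvalue_lift_none_t.
  by rewrite qvalue_lift_some (cert_harmonic cert).
- exact: lift_progress.
Qed.

Lemma Rstar_lift u : is_vertex T u ->
  Rstar ND NT Nrho fail gadget_val (embed_vertex u) = scale * Rstar D T rho z val u.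
Proof.
have [N_state N_pair] := (Rstar_cert_state gadget_val_gp Nrho_ge0 lift_certificate,
                          Rstar_cert_pair gadget_val_gp Nrho_ge0 lift_certificate).
case: u => [s|[s a]] /= uV; first by rewrite N_state (Rstar_cert_state val_gp rho_ge0 cert).
by rewrite N_pair ?inl_notin_NT // (Rstar_cert_pair val_gp rho_ge0 cert) ?qvalue_lift_some.
Qed.

End LiftValuation.

Section Reweight.
Variable valN : NS S -> NA A -> NS S -> Real.
Hypothesis valN_gp : graph_preserving ND NT valN.
Variables (hN : NS S -> Real) (σN : {ffun NS S -> NA A}) (rN : NS S -> nat).
Hypothesis certN : certificate ND NT Nrho fail valN hN σN rN.

Local Notation qN := (qvalue ND fail valN).

Lemma certN_fail : hN fail = 0.
Proof. by rewrite (cert_target certN) ?fail_in_NT // /weight /Nrho /= rmorph0. Qed.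

Lemma certN_fin : hN fin = 1.
Proof. by rewrite (cert_target certN) ?fin_in_NT // /weight /Nrho /= rmorph1. Qed.

Lemma qvalueN_target_some f s a : s \in T -> qN f (inl s) (Some a) = f fail.
Proof.
move=> sT; rewrite /qvalue /Defs.row exists_ND_some target_no_succ //.
exact: sumr_delta.
Qed.

Lemma qvalueN_nontarget_none f s : s \notin T -> qN f (inl s) None = f fail.
Proof.
move=> sT; rewrite /qvalue /Defs.row; case: (boolP [exists y, ND (inl s) None y]).
  by case/existsP=> y; rewrite ND_none_nontarget.
by rewrite sumr_delta.
Qed.

Lemma qvalueN_t_none f (i : 'I_n.+1) : (i : nat) != 0%N ->
  exists2 p, 0 < p < 1 & qN f (inl (t i)) None = p * f fin + (1 - p) * f (inl (t (prev i))).
Proof.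
move=> i0; have succ : [exists y, ND (inl (t i)) None y].
  by apply/existsP; exists fin; rewrite ND_none_t (negPf i0).
have [val_pos val0 val1] := valN_gp (inl_notin_NT (t i)) succ.
have ND_t y : ND (inl (t i)) None y = (y == fin) || (y == inl (t (prev i))).
  by rewrite ND_none_t (negPf i0).
have val_other y : y != fin -> y != inl (t (prev i)) -> valN (inl (t i)) None y = 0.
  by move=> y1 y2; apply: val0; rewrite ND_t negb_or y1 y2.
set p := valN (inl (t i)) None fin; set q := valN (inl (t i)) None (inl (t (prev i))).
have sum_two_succ (g : NS S -> Real) :
    \sum_y valN (inl (t i)) None y * g y = p * g fin + q * g (inl (t (prev i))).
  rewrite (bigD1 fin) //= (bigD1 (inl (t (prev i)))) //= big1 ?addr0 // => y /andP[y1 y2].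
  by rewrite val_other ?mul0r.
have p_gt0 : 0 < p by apply: val_pos; rewrite ND_t eqxx.
have q_gt0 : 0 < q by apply: val_pos; rewrite ND_t eqxx orbT.
have pq1 : q = 1 - p.
  have := sum_two_succ (fun=> 1); under eq_bigr do rewrite mulr1.
  by rewrite val1 !mulr1 => ->; rewrite addrC addKr.
exists p; first by rewrite p_gt0 /= -subr_gt0 -pq1.
by rewrite -pq1 -sum_two_succ /qvalue /Defs.row succ.
Qed.

Lemma certN_t0 : hN (inl z) = 0.
Proof.
rewrite -(cert_harmonic certN (inl_notin_NT z)); case: (σN (inl z)) => [a|].
  by rewrite qvalueN_target_some ?t_in_T ?certN_fail.
have succ : [exists y, ND (inl z) None y] by apply/existsP; exists fail; rewrite ND_none_t.
have [_ val0 _] := valN_gp (inl_notin_NT z) succ.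
rewrite /qvalue /Defs.row succ big1 // => y _.
have [->|y_fail] := eqVneq y fail; first by rewrite certN_fail mulr0.
by rewrite val0 ?mul0r // ND_none_t.
Qed.

Lemma gadget_step (i : 'I_n.+1) : (i : nat) != 0%N ->
  exists2 p, 0 < p < 1 & hN (inl (t i)) = p + (1 - p) * hN (inl (t (prev i))).
Proof.
move=> i0; have [p /andP[p_gt0 p_lt1] qE] := qvalueN_t_none hN i0.
rewrite certN_fin mulr1 in qE; exists p; first by rewrite p_gt0.
have harm := cert_harmonic certN (inl_notin_NT (t i)).
rewrite -qE -harm; case E: (σN _) harm => [a|] // harm.
have := cert_super certN None (inl_notin_NT (t i)).
rewrite -harm qvalueN_target_some ?t_in_T // certN_fail qE.
have : 0 < p + (1 - p) * hN (inl (t (prev i))).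
  by rewrite ltr_wpDr // mulr_ge0 ?(cert_ge0 certN) // subr_ge0 ltW.
by move=> avg_gt0; rewrite leNgt avg_gt0.
Qed.

Definition node_value k := hN (inl (t (inord k))).
Definition node_weight k := weight rho (t (inord k)).

Lemma inord0 : inord 0 = ord0 :> 'I_n.+1.
Proof. by apply: val_inj; rewrite /= inordK. Qed.

Lemma node_value0 : node_value 0 = 0.
Proof. by rewrite /node_value inord0 certN_t0. Qed.

Lemma node_weight0 : node_weight 0 = 0.
Proof. by rewrite /node_weight inord0 /weight rho_t0 rmorph0. Qed.

Lemma node_value_step k : (k < n)%N ->
  exists2 p, 0 < p < 1 & node_value k.+1 = p + (1 - p) * node_value k.
Proof.
move=> kn; have k1 : ((inord k.+1 : 'I_n.+1) : nat) != 0%N by rewrite inordK.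
have [p p01 stepE] := gadget_step k1; exists p => //.
by rewrite /node_value stepE inordK.
Qed.

Lemma node_value_lt1 k : (k <= n)%N -> node_value k < 1.
Proof.
elim: k => [|k IH] kn; first by rewrite node_value0 ltr01.
have [p /andP[p_gt0 p_lt1] ->] := node_value_step kn.
rewrite -ltrBrDl -[X in _ < X]mulr1 ltr_pM2l ?subr_gt0 //.
exact: IH (ltnW kn).
Qed.

Lemma node_value_incr k : (k < n)%N -> node_value k < node_value k.+1.
Proof.
move=> kn; have [p /andP[p_gt0 p_lt1] ->] := node_value_step kn.
have -> : p + (1 - p) * node_value k = node_value k + p * (1 - node_value k) by ring.
by rewrite ltrDl mulr_gt0 // subr_gt0 node_value_lt1 // ltnW.
Qed.

Lemma node_weight_incr k : (k < n)%N -> node_weight k < node_weight k.+1.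
Proof. by move=> kn; rewrite ltr_rat rho_t_incr // !inordK // ltnS ltnW. Qed.

Local Notation phi := (pwlin n node_value node_weight).

Lemma phi_incr : {homo phi : u v / u < v}.
Proof. exact: pwlin_incr node_value_incr node_weight_incr. Qed.

Lemma ler_phi : {mono phi : u v / u <= v}.
Proof. exact: ler_pwlin node_value_incr node_weight_incr. Qed.

Lemma phi0 : phi 0 = 0.
Proof. exact: pwlin0 node_value0 node_weight0 node_value_incr. Qed.

Lemma phi_t i : phi (hN (inl (t i))) = weight rho (t i).
Proof.
have := pwlin_node node_value0 node_weight0 node_value_incr (ltn_ord i : (i <= n)%N).
by rewrite /node_value /node_weight inord_val.
Qed.

Definition reweight_spec (valM : S -> A -> S -> Real) :=
  forall s a, s \notin T -> [exists s', D s a s'] ->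
    distr_on (D s a) (valM s a) /\
    \sum_s' valM s a s' * phi (hN (inl s')) = phi (qN hN (inl s) (Some a)).

Lemma reweight_exists : exists valM, reweight_spec valM.
Proof.
have /choice[f f_spec] : forall sa : S * A, exists p : S -> Real,
    sa.1 \notin T -> [exists s', D sa.1 sa.2 s'] -> distr_on (D sa.1 sa.2) p /\
    \sum_s' p s' * phi (hN (inl s')) = phi (qN hN (inl sa.1) (Some sa.2)).
  case=> s a /=; have [sT|sT] := boolP (s \in T); first by exists (fun=> 0).
  have [succ|] := boolP [exists s', D s a s']; last by exists (fun=> 0).
  have succN : [exists y, ND (inl s) (Some a) y] by rewrite exists_ND_some.
  have [pos zero one] := valN_gp (inl_notin_NT s) succN.
  have inr0 b : valN (inl s) (Some a) (inr b) = 0 by apply: zero.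
  have q_distr : distr_on (D s a) (fun s' => valN (inl s) (Some a) (inl s')).
    split=> [s' Dss'|s' nDss'|]; [exact: pos | exact: zero |].
    by rewrite -one big_sumType /= [X in _ = _ + X]big1 ?addr0.
  have [p p_distr pE] := distr_on_avg_comp (fun s' => hN (inl s')) phi_incr q_distr.
  exists p => _ _; split=> //; rewrite pE /qvalue /Defs.row succN big_sumType /=.
  by rewrite [X in _ + X]big1 ?addr0 // => b _; rewrite inr0 mul0r.
by exists (fun s a => f (s, a)) => s a; apply: (f_spec (s, a)).
Qed.

Variable valM : S -> A -> S -> Real.
Hypothesis valM_spec : reweight_spec valM.
Variable a0 : A.

Lemma valM_gp : graph_preserving D T valM.
Proof. by move=> s a sT succ; have [[]] := valM_spec sT succ. Qed.

Definition reweight_value s := phi (hN (inl s)).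

Definition reweight_strategy : {ffun S -> A} :=
  [ffun s => if σN (inl s) is Some a then a else a0].

Definition reweight_rank s := rN (inl s).

Local Notation qM := (qvalue D z valM).

Lemma reweight_value_ge0 s : 0 <= reweight_value s.
Proof. by rewrite -phi0 ler_phi (cert_ge0 certN). Qed.

Lemma qvalue_reweight s a : s \notin T ->
  qM reweight_value s a = phi (qN hN (inl s) (Some a)).
Proof.
move=> sT; have [succ|nosucc] := boolP [exists s', D s a s'].
  by rewrite -(valM_spec sT succ).2; apply: eq_bigr => s' _; rewrite /Defs.row succ.
rewrite /qvalue /Defs.row (negPf nosucc) exists_ND_some (negPf nosucc) !sumr_delta.
by rewrite /reweight_value certN_t0 certN_fail.
Qed.

Lemma certN_nontarget_none s : s \notin T -> σN (inl s) = None -> hN (inl s) = 0.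
Proof.
move=> sT σN_s; rewrite -(cert_harmonic certN (inl_notin_NT s)) σN_s.
by rewrite qvalueN_nontarget_none ?certN_fail.
Qed.

Lemma reweight_progress s : s \notin T -> 0 < reweight_value s ->
  exists2 s', 0 < Defs.row D z valM s (reweight_strategy s) s' &
    [\/ s' \in T, reweight_value s' = 0 | (reweight_rank s' < reweight_rank s)%N].
Proof.
move=> sT; rewrite /reweight_value -{1}phi0 (leW_mono ler_phi) => hN_pos.
have [y pos_y prog] := cert_progress certN (inl_notin_NT s) hN_pos.
rewrite ffunE; case E: (σN (inl s)) pos_y => [a|] pos_y; last first.
  by move: hN_pos; rewrite certN_nontarget_none ?ltxx.
have harm := cert_harmonic certN (inl_notin_NT s); rewrite E in harm.
have [succ|nosucc] := boolP [exists s', D s a s']; last first.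
  move: hN_pos; rewrite -harm /qvalue /Defs.row exists_ND_some (negPf nosucc).
  by rewrite sumr_delta certN_fail ltxx.
have succN : [exists y, ND (inl s) (Some a) y] by rewrite exists_ND_some.
have [_ zero _] := valN_gp (inl_notin_NT s) succN.
move: pos_y; rewrite /Defs.row succN; case: y prog => [s'|b] prog pos_y; last first.
  by move: pos_y; rewrite zero ?ltxx.
have Dss' : D s a s' by apply: contraTT pos_y => nD; rewrite zero ?ltxx.
exists s'; first by rewrite /Defs.row succ (distr_on_gt0 (valM_spec sT succ).1).
case: prog => [s'NT|h0|lt_r]; first by rewrite (negPf (inl_notin_NT s')) in s'NT.
  by apply: Or32; rewrite /reweight_value h0 phi0.
exact: Or33.
Qed.

Lemma reweight_certificate :
  certificate D T rho z valM reweight_value reweight_strategy reweight_rank.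
Proof.
split.
- exact: reweight_value_ge0.
- by move=> x /T_t[i ->]; apply: phi_t.
- move=> s a sT; rewrite qvalue_reweight // ler_phi.
  exact: (cert_super certN (Some a) (inl_notin_NT s)).
- move=> s sT; rewrite ffunE; case E: (σN (inl s)) => [a|].
    by rewrite qvalue_reweight // -E (cert_harmonic certN (inl_notin_NT s)).
  have val0 : reweight_value s = 0 by rewrite /reweight_value certN_nontarget_none ?phi0.
  have : qM reweight_value s a0 <= reweight_value s.
    by rewrite qvalue_reweight // ler_phi (cert_super certN (Some a0) (inl_notin_NT s)).
  rewrite val0 => le0; apply/eqP; rewrite eq_le le0 sumr_ge0 // => s' _.
  by rewrite mulr_ge0 ?reweight_value_ge0 ?(row_ge0 _ valM_gp _ _ sT).
- exact: reweight_progress.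
Qed.

Lemma Rstar_reweight u : is_vertex T u ->
  Rstar D T rho z valM u = phi (Rstar ND NT Nrho fail valN (embed_vertex u)).
Proof.
have [N_state N_pair] := (Rstar_cert_state valN_gp Nrho_ge0 certN,
                          Rstar_cert_pair valN_gp Nrho_ge0 certN).
have [M_state M_pair] := (Rstar_cert_state valM_gp rho_ge0 reweight_certificate,
                          Rstar_cert_pair valM_gp rho_ge0 reweight_certificate).
case: u => [s|[s a]] /= uV; first by rewrite N_state M_state.
by rewrite N_pair ?inl_notin_NT // M_pair // qvalue_reweight.
Qed.

End Reweight.

Variable a0 : A.

Lemma never_worse_of_embed v (W : {set vertex S A}) :
  is_vertex T v -> {subset W <= is_vertex T} ->
  never_worse ND NT Nrho fail (embed_vertex v) (embed_set W) ->
  never_worse D T rho z v W.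
Proof.
move=> vV WV nwN val val_gp.
have [h [σ [r cert]]] := certificate_exists z val_gp rho_ge0 a0.
have [_ /imsetP[w wW ->] le_vw] := nwN _ (gadget_val_gp val_gp cert).
exists w => //; rewrite -(ler_pM2l scale_gt0).
by rewrite -(Rstar_lift val_gp cert vV) -(Rstar_lift val_gp cert (WV w wW)).
Qed.

Lemma never_worse_embed v (W : {set vertex S A}) :
  is_vertex T v -> {subset W <= is_vertex T} ->
  never_worse D T rho z v W ->
  never_worse ND NT Nrho fail (embed_vertex v) (embed_set W).
Proof.
move=> vV WV nwM valN valN_gp.
have [hN [σN [rN certN]]] := certificate_exists fail valN_gp Nrho_ge0 None.
have [valM valM_spec] := reweight_exists valN_gp certN.
have [w wW le_vw] := nwM _ (valM_gp valM_spec).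
exists (embed_vertex w); first exact: imset_f.
rewrite -(ler_phi valN_gp certN) -(Rstar_reweight valN_gp certN valM_spec a0 vV).
by rewrite -(Rstar_reweight valN_gp certN valM_spec a0 (WV w wW)).
Qed.

End Gadget.

Unset Implicit Arguments.

Theorem theorem2 (S A : finType) (D : S -> A -> S -> bool) (T : {set S})
    (rho : S -> rat) (n : nat) (t : 'I_n.+1 -> S)
    (HA : (0 < #|A|)%N)
    (Habs : targets_absorbing D T)
    (HT : T = [set t i | i : 'I_n.+1])
    (Ht0 : rho (t ord0) = 0)
    (Hmono : forall i j : 'I_n.+1, (i < j)%N -> rho (t i) < rho (t j))
    (v : vertex S A) (W : {set vertex S A}) :
  is_vertex T v ->
  {subset W <= is_vertex T} ->
  (never_worse D T rho (t ord0) v W <->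
   never_worse (ND D t) (NT S) (Nrho (S:=S)) (fail S)
     (embed_vertex v) (embed_set W)).
Proof.
move=> vV WV; have [a0 _] := card_gt0P HA.
by split; [apply: never_worse_embed | apply: never_worse_of_embed].
Qed.
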